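(* On the carrier $\mathbb{F}_2^5$, with indices taken modulo $5$, define $((x_i)_{i=1}^5\diamond(y_i)_{i=1}^5)_i=1-x_{i+1}y_{i-1}$. This finite magma satisfies $\mathrm{x}\simeq(\mathrm{y}\diamond\mathrm{x})\diamond(\mathrm{x}\diamond(\mathrm{z}\diamond\mathrm{y}))$ but does not satisfy $\mathrm{x}\simeq(\mathrm{x}\diamond\mathrm{x})\diamond(\mathrm{x}\diamond\mathrm{x})$. Consequently the first law does not imply the second, even for finite magmas.
   Context: $\mathbb{F}_2$ is the field with two elements; arithmetic in each coordinate is in $\mathbb{F}_2$. A magma satisfies a law if the identity holds for all assignments of variables. *)

From mathcomp Require Import all_boot all_algebra.
Set Implicit Arguments. Unset Strict Implicit. Unset Printing Implicit Defensive.
Import GRing.Theory.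
Local Open Scope ring_scope.

(* Carrier F_2^5: functions from the index set Z/5 (represented by 'I_5,
   i.e. indices 0..4 instead of 1..5) to the prime field 'F_2. *)
Definition F25 := {ffun 'I_5 -> 'F_2}.

Definition diamond (x y : F25) : F25 :=
  [ffun i : 'I_5 => 1 - x (ordS i) * y (ord_pred i)].

Definition satisfies_law1 (T : Type) (op : T -> T -> T) : Prop :=
  forall x y z : T, x = op (op y x) (op x (op z y)).

Definition satisfies_law2 (T : Type) (op : T -> T -> T) : Prop :=
  forall x : T, x = op (op x x) (op x x).

(* Coordinatewise, the right-hand side of law 1 at index i only involves
   a = x_i, b = y_(i+2) and c = z_(i-1) (because i-3 = i+2 mod 5), and equals
   1 - (1 - b a)(1 - a (1 - c b)).  Since a and b are idempotent, the product
   collapses to 1 - a.  Law 2 fails at the indicator vector of index 0: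
   x <> x is the all-ones vector and (x <> x) <> (x <> x) is zero. *)
From mathcomp Require Import all_boot all_algebra.
From mathcomp Require Import ring.
Import GRing.Theory.
Local Open Scope ring_scope.

Lemma idempotent_law1_identity (R : comPzRingType) (a b c : R) :
  a * a = a -> b * b = b -> a = 1 - (1 - b * a) * (1 - a * (1 - c * b)).
Proof.
move=> aa bb.
have -> : (1 - b * a) * (1 - a * (1 - c * b))
          = 1 - a + b * (a * a - a) - c * (a * a * (b * b - b) + b * (a * a - a)).
  by ring.
by rewrite aa bb; ring.
Qed.

Lemma Fp2_idem (a : 'F_2) : a * a = a.
Proof. by case: a => [[|[|n]] //] ?; apply: val_inj. Qed.

Lemma ord_pred3E (i : 'I_5) : ord_pred (ord_pred (ord_pred i)) = ordS (ordS i).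
Proof. by apply: val_inj; case: i => [[|[|[|[|[|]]]]]]. Qed.

Lemma diamond_law1 : satisfies_law1 diamond.
Proof.
move=> x y z; apply/ffunP => i.
rewrite !ffunE ordSK ord_predK ord_pred3E.
exact/idempotent_law1_identity/Fp2_idem/Fp2_idem.
Qed.

Lemma diamond_not_law2 : ~ satisfies_law2 diamond.
Proof.
move=> /(_ [ffun i => (i == ord0)%:R]) /ffunP /(_ ord0).
by rewrite !ffunE => /(congr1 val).
Qed.

Theorem mainTheorem18 :
  satisfies_law1 diamond /\ ~ satisfies_law2 diamond /\
  (exists (T : finType) (op : T -> T -> T),
      satisfies_law1 op /\ ~ satisfies_law2 op).
Proof.
split; first exact: diamond_law1.
split; first exact: diamond_not_law2.
by exists F25, diamond; split; [exact: diamond_law1 | exact: diamond_not_law2].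
Qed.
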